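(* Let $\Gamma$ and $\Gamma'$ be triangulations of connected closed $2$-dimensional surfaces $M$ and $M'$, and let $\tau,\tau'$ be $z$-orientations of $\Gamma,\Gamma'$ respectively such that all faces of $(\Gamma,\tau)$ and of $(\Gamma',\tau')$ are of type II. Then for any face $F$ of $\Gamma$, any face $F'$ of $\Gamma'$ and every special homeomorphism $g:\partial F\to\partial F'$, there exists a $z$-orientation of the connected sum $\Gamma\#_g\Gamma'$ for which all faces are of type II.
   Context: A triangulation of a connected closed surface (not necessarily orientable) is a closed $2$-cell embedding of a connected finite simple graph all of whose faces are triangles. Two edges are adjacent if distinct and in a common face; two faces are adjacent if distinct and their intersection is an edge. A zigzag is a sequence of edges $(e_i)_{i\in\mathbb{N}}$ such that for every $i$: $e_i,e_{i+1}$ are adjacent, the faces containing $e_i,e_{i+1}$ and $e_{i+1},e_{i+2}$ are adjacent, and $e_i,e_{i+2}$ are disjoint; it is a cyclic sequence, equivalently a cyclic vertex sequence $v_1,\dots,v_n$ with $e_i=v_iv_{i+1}$, traversing $e_i$ from $v_i$ to $v_{i+1}$. A $z$-orientation $\tau$ is a set of zigzags containing exactly one of $Z,Z^{-1}$ (reversed zigzag) for every zigzag $Z$. Every edge is traversed exactly twice in total by zigzags of $\tau$; it is of type I if in opposite directions, of type II if in the same direction. A face is of type II if all three of its edges are of type II (they then form a directed cycle); otherwise (two type I edges and one type II edge) it is of type I. A homeomorphism $g:\partial F\to\partial F'$ between boundaries of faces is special if it maps vertices to vertices. The connected sum $\Gamma\#_g\Gamma'$ is the triangulation of $M\# M'$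 obtained by removing the interiors of $F$ and $F'$ and gluing $\partial F$ to $\partial F'$ via $g$. *)

From mathcomp Require Import all_boot.
Set Implicit Arguments. Unset Strict Implicit. Unset Printing Implicit Defensive.

Section Triang.
Variable V : finType.

(* A triangulation is given by its set of faces T; each face is the set of its
   three vertices.  Vertices of the triangulation are those lying on a face. *)
Definition vert (T : {set {set V}}) (v : V) := [exists f in T, v \in f].

Definition is_edge (T : {set {set V}}) (e : {set V}) :=
  (#|e| == 2) && [exists f in T, e \subset f].

Definition gadj (T : {set {set V}}) (u w : V) :=
  (u != w) && [exists f in T, (u \in f) && (w \in f)].

Definition link_adj (T : {set {set V}}) (v : V) (f g : {set V}) :=
  [&& f \in T, g \in T, v \in f, v \in g, f != g & #|f :&: g| == 2].

Definition triangulation (T : {set {set V}}) : Prop :=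
  [/\ T != set0,
      forall f, f \in T -> #|f| = 3,
      forall e, is_edge T e -> #|[set f in T | e \subset f]| = 2,
      forall v f g, f \in T -> g \in T -> v \in f -> v \in g ->
        connect (link_adj T v) f g
    & forall u w, vert T u -> vert T w -> connect (gadj T) u w].

Definition cyc (x : V) (s : seq V) (k : nat) := nth x s (k %% size s).

Definition zz_local (T : {set {set V}}) (x : V) (s : seq V) (i : nat) :=
  let e k := [set cyc x s k; cyc x s k.+1] in
  let fc k := e k :|: e k.+1 in
  [&& is_edge T (e i), is_edge T (e i.+1), e i != e i.+1,
      [exists f in T, fc i \subset f],
      fc i != fc i.+1, is_edge T (fc i :&: fc i.+1)
    & [disjoint e i & e i.+2]].

(* a zigzag, as a cyclic vertex sequence (listed over one minimal period) *)
Definition is_zigzag (T : {set {set V}}) (s : seq V) : bool :=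
  match s with
  | [::] => false
  | x :: _ => [forall i : 'I_(size s), zz_local T x s i] &&
              [forall k : 'I_(size s), (0 < k) ==> (rot k s != s)]
  end.

Definition ceq (s t : seq V) := has (fun k => rot k s == t) (iota 0 (size s)).

(* a z-orientation: a set (duplicate-free list, up to rotation) of zigzags
   containing exactly one of Z, Z^{-1} for every zigzag Z *)
Definition z_orientation (T : {set {set V}}) (tau : seq (seq V)) : Prop :=
  [/\ all (is_zigzag T) tau,
      forall i j, i < size tau -> j < size tau -> i != j ->
        ~~ ceq (nth [::] tau i) (nth [::] tau j)
    & forall s, is_zigzag T s -> (has (ceq s) tau) (+) (has (ceq (rev s)) tau)].

Definition trav (tau : seq (seq V)) (u v : V) : nat :=
  \sum_(t <- tau) count (pred1 (u, v)) (zip t (rot 1 t)).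

Definition edge_typeII (tau : seq (seq V)) (u v : V) :=
  ((trav tau u v == 2) && (trav tau v u == 0)) ||
  ((trav tau u v == 0) && (trav tau v u == 2)).

Definition face_typeII (tau : seq (seq V)) (f : {set V}) : Prop :=
  forall u v, u \in f -> v \in f -> u != v -> edge_typeII tau u v.

Definition all_faces_typeII (T : {set {set V}}) (tau : seq (seq V)) : Prop :=
  forall f, f \in T -> face_typeII tau f.

End Triang.

(* connected sum: remove faces F, F', glue dF to dF' via the vertex bijection g.
   Vertex type V + V'; the vertices of F are replaced by their g-images. *)
Definition csum_vtx (V V' : finType) (F : {set V}) (g : V -> V') (v : V) : V + V' :=
  if v \in F then inr (g v) else inl v.

Definition csum (V V' : finType) (T : {set {set V}}) (T' : {set {set V'}})
  (F : {set V}) (F' : {set V'}) (g : V -> V') : {set {set (V + V')}} :=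
  [set (csum_vtx F g) @: f | f : {set V} in T :\ F] :|: [set (@inr V V') @: f | f : {set V'} in T' :\ F'].

From mathcomp Require Import all_boot zify.
Set Implicit Arguments. Unset Strict Implicit. Unset Printing Implicit Defensive.

(* Call an edge relation d directed when every face is a directed triangle for
   it: for each flag (x, y, z) of a face, d y x = ~~ d x y and d x y implies
   d y z.  A zigzag through the flag (x, y, z) goes on along yz in the same
   sense as along xy, so it either follows d everywhere or against it
   everywhere.  Keeping from each pair Z, Z^-1 the member that follows d gives
   a z-orientation traversing every edge twice in the direction of d, i.e. all
   faces are of type II; conversely, the common direction of the two
   traversals of each edge of a type II z-orientation is directed.  On the
   connected sum, g maps the directed triangle F onto the directed triangle F'
   either preserving or reversing orientation; after reversing the direction
   on the second surface if needed, the two directions glue to a directed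
   relation on the connected sum, hence to the required z-orientation. *)

Section ThreeSets.
Variable W : finType.
Implicit Types (a b c x : W) (f : {set W}).

Lemma in_set3 x a b c : (x \in [set a; b; c]) = [|| x == a, x == b | x == c].
Proof. by rewrite !inE orbA. Qed.

Lemma set3C12 a b c : [set a; b; c] = [set b; a; c].
Proof. by apply/setP=> x; rewrite !in_set3; case: (x == a); case: (x == b). Qed.

Lemma set3C23 a b c : [set a; b; c] = [set a; c; b].
Proof.
by apply/setP=> x; rewrite !in_set3; case: (x == b); case: (x == c); rewrite ?orbT.
Qed.

Lemma set3_rot a b c : [set a; b; c] = [set b; c; a].
Proof. by rewrite set3C12 set3C23. Qed.

Lemma set3_rev a b c : [set a; b; c] = [set c; b; a].
Proof. by rewrite set3_rot set3C12. Qed.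

Lemma set2U_chain a b c : [set a; b] :|: [set b; c] = [set a; b; c].
Proof.
by apply/setP=> x; rewrite !inE; case: (x == a); case: (x == b); case: (x == c).
Qed.

Lemma cards3 a b c : a != b -> b != c -> a != c -> #|[set a; b; c]| = 3.
Proof.
move=> ab bc ac; have -> : [set a; b; c] = c |: [set a; b].
  by apply/setP=> x; rewrite !inE; case: (x == c); rewrite ?orbT ?orbF.
by rewrite cardsU1 cards2 ab !inE negb_or (eq_sym c a) ac (eq_sym c b) bc.
Qed.

Lemma card3_set3 f a b c : #|f| = 3 -> a \in f -> b \in f -> c \in f ->
  a != b -> b != c -> a != c -> f = [set a; b; c].
Proof.
move=> f3 af bf cf ab bc ac; apply/eqP; rewrite eq_sym eqEcard cards3 // f3 leqnn andbT.
by apply/subsetP=> x; rewrite in_set3 => /or3P [] /eqP ->.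
Qed.

Lemma card3_third f a b : #|f| = 3 -> a \in f -> b \in f -> a != b ->
  exists c, [/\ c \in f, c != a, c != b & f = [set a; b; c]].
Proof.
move=> f3 af bf ab.
have : 0 < #|f :\: [set a; b]|.
  rewrite cardsD f3 (setIidPr _) ?cards2 ?ab //.
  by apply/subsetP=> x /set2P [] ->.
case/card_gt0P=> c /setDP [cf]; rewrite !inE negb_or => /andP [ca cb].
by exists c; split=> //; apply: card3_set3; rewrite // eq_sym.
Qed.

Definition cyclic_on (D : rel W) a b c :=
  [/\ D b c = D a b, D c a = D a b, D b a = ~~ D a b, D c b = ~~ D a b & D a c = ~~ D a b].

Lemma cyclic_on_eq (D1 D2 : rel W) a b c :
  cyclic_on D1 a b c -> cyclic_on D2 a b c -> D1 a b = D2 a b ->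
  {in [set a; b; c] &, forall x y, x != y -> D1 x y = D2 x y}.
Proof.
case=> bc1 ca1 ba1 cb1 ac1 [bc2 ca2 ba2 cb2 ac2] ab x y.
rewrite !in_set3 => /or3P [] /eqP -> /or3P [] /eqP ->; rewrite ?eqxx //;
  by rewrite ?bc1 ?ca1 ?ba1 ?cb1 ?ac1 ?bc2 ?ca2 ?ba2 ?cb2 ?ac2 ab.
Qed.

End ThreeSets.

Section CyclicSequences.
Variable W : finType.
Implicit Types (x y : W) (s t : seq W).

Definition steps s := zip s (rot 1 s).

Lemma eq_cyc_mod x s i j : i = j %[mod size s] -> cyc x s i = cyc x s j.
Proof. by rewrite /cyc => ->. Qed.

Lemma cyc_default x y s i : 0 < size s -> cyc x s i = cyc y s i.
Proof. by move=> s_gt0; apply: set_nth_default; rewrite ltn_pmod. Qed.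

Lemma cyc_small x s i : i < size s -> cyc x s i = nth x s i.
Proof. by move=> lt_i; rewrite /cyc modn_small. Qed.

Lemma cyc_rot x s k i : k <= size s -> cyc x (rot k s) i = cyc x s (i + k).
Proof.
move=> le_k; have [/size0nil -> | s_gt0] := posnP (size s).
  by rewrite /cyc !nth_nil.
rewrite /cyc size_rot -modnDml; set n := size s in le_k s_gt0 *.
have : i %% n < n by rewrite ltn_pmod.
rewrite /rot nth_cat size_drop -/n; move: (i %% n) => j lt_j.
case: ltnP => [lt_jk | le_kj].
  by rewrite nth_drop modn_small ?[k + j]addnC //; lia.
have -> : j + k = (j + k - n) + n by lia.
rewrite modnDr modn_small ?nth_take; [congr nth | |]; lia.
Qed.

Lemma mul_modS_opp m a b : a + b = 0 %[mod m.+1] -> m * a = b %[mod m.+1].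
Proof.
move=> opp_ab; apply/eqP; rewrite -(eqn_modDr a) addnC -mulSn modnMr.
by rewrite addnC opp_ab mod0n.
Qed.

(* [m * i.+1] stands for [-(i + 1)] modulo [m.+1], avoiding truncated
   subtraction. *)
Lemma cyc_rev x s m i : size s = m.+1 -> cyc x (rev s) i = cyc x s (m * i.+1).
Proof.
move=> sz; rewrite /cyc size_rev sz nth_rev ?sz ?ltn_pmod // subSS.
have le_im : i %% m.+1 <= m by rewrite -ltnS ltn_pmod.
have -> : m * i.+1 = (i - i %/ m.+1) * m.+1 + (m - i %% m.+1).
  move: le_im (divn_eq i m.+1); move: (i %/ m.+1) (i %% m.+1) => q j le_jm ->.
  have -> : q * m.+1 + j - q = q * m + j by rewrite mulnS; lia.
  by rewrite -addnS mulnDr mulnDl !mulnS; lia.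
by rewrite modnMDl (@modn_small (m - _)) //; lia.
Qed.

Lemma cyc_in_steps x s i : 0 < size s -> (cyc x s i, cyc x s i.+1) \in steps s.
Proof.
move=> s_gt0; have lt_i : i %% size s < size s by rewrite ltn_pmod.
have -> : (cyc x s i, cyc x s i.+1) = nth (x, x) (steps s) (i %% size s).
  rewrite nth_zip ?size_rot //; congr (_, _).
  rewrite -cyc_small ?size_rot // cyc_rot //.
  by apply: eq_cyc_mod; rewrite modnDml addn1.
by rewrite mem_nth // size_zip size_rot minnn.
Qed.

Lemma ceq_cyc_in_steps x s t i : 0 < size s -> ceq s t ->
  (cyc x s i, cyc x s i.+1) \in steps t.
Proof.
move=> s_gt0 /hasP [k]; rewrite mem_iota add0n => /andP [_ lt_k] /eqP <-.
have := @cyc_in_steps x (rot k s) (i + (size s - k)).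
rewrite size_rot => /(_ s_gt0).
rewrite !cyc_rot ?(ltnW lt_k) // -addSn -!addnA subnK ?(ltnW lt_k) //.
by rewrite !(@eq_cyc_mod x s (_ + size s) _ (modnDr _ _)).
Qed.

Lemma ceq_rev_cyc_in_steps x s t i : 0 < size s -> ceq (rev s) t ->
  (cyc x s i.+1, cyc x s i) \in steps t.
Proof.
case: s => [|y s] // _ /(ceq_cyc_in_steps x (size s * i.+2)).
rewrite size_rev !(@cyc_rev x (y :: s) (size s)) //= => /(_ isT).
set n := size s; have cyc_opp j k : j + k = 0 %[mod n.+1] ->
    cyc x (y :: s) (n * j) = cyc x (y :: s) k.
  by move=> opp_jk; apply: eq_cyc_mod; exact: mul_modS_opp.
rewrite (cyc_opp _ i.+1) ?(cyc_opp _ i) //.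
all: by rewrite (_ : _ + _ = i.+2 * n.+1) ?modnMl //; lia.
Qed.

Lemma ceq_rot s k : k < size s -> ceq (rot k s) s.
Proof.
move=> lt_k; apply/hasP; rewrite size_rot.
have [k0 | k_gt0] := posnP k.
  by exists 0; rewrite ?k0 ?rot0 // mem_iota; lia.
exists (size s - k); first by rewrite mem_iota; lia.
by rewrite -(size_rot k s) -/(rotr k (rot k s)) rotK.
Qed.

End CyclicSequences.

Lemma fconnect_iter_findex (T : finType) (f : T -> T) x y :
  fconnect f x y -> exists2 k, k < order f x & y = iter k f x.
Proof. by move=> xy; exists (findex f x y); rewrite ?findex_max ?iter_findex. Qed.

(** * Zigzags as orbits of flags *)

Section ZigzagStep.
Variables (W : finType) (T : {set {set W}}).
Hypothesis card_face : forall f, f \in T -> #|f| = 3.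
Hypothesis card_edge_faces : forall e, is_edge T e -> #|[set f in T | e \subset f]| = 2.

Definition flag := (W * W * W)%type.

Definition is_flag (s : flag) := let: (x, y, z) := s in
  [&& [set x; y; z] \in T, x != y, y != z & x != z].

Definition is_opposite (x y z w : W) :=
  [&& [set y; z; w] \in T, w != x, w != y & w != z].

Definition opposite x y z := odflt x [pick w | is_opposite x y z w].

(* A zigzag with consecutive vertices x, y, z continues to the vertex opposite
   to x across the edge yz, so zigzags are the orbits of this step on flags. *)
Definition zstep (s : flag) : flag := let: (x, y, z) := s in
  if is_flag (x, y, z) then (y, z, opposite x y z) else (x, y, z).

Arguments zstep : simpl never.

Definition flip (s : flag) : flag := let: (x, y, z) := s in (z, y, x).

Lemma flipK : involutive flip. Proof. by case=> [[]]. Qed.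

Lemma is_flag_rot x y z : is_flag (x, y, z) -> is_flag (y, z, x).
Proof.
case/and4P=> xyzT xy yz xz.
by apply/and4P; split=> //; [rewrite -set3_rot | rewrite eq_sym | rewrite eq_sym].
Qed.

Lemma is_flag_flip s : is_flag s -> is_flag (flip s).
Proof.
case: s => [[x y] z] /and4P [xyzT xy yz xz].
by apply/and4P; split=> //; [rewrite -set3_rev | rewrite eq_sym ..].
Qed.

Lemma is_flag_edge x y z : is_flag (x, y, z) -> is_edge T [set x; y].
Proof.
case/and4P=> xyzT xy _ _; rewrite /is_edge cards2 xy; apply/existsP.
by exists [set x; y; z]; rewrite xyzT; apply/subsetP=> u /set2P [] ->; rewrite !inE eqxx ?orbT.
Qed.

Lemma flag_of_face f x y z : f \in T -> x \in f -> y \in f -> z \in f ->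
  x != y -> y != z -> x != z -> is_flag (x, y, z).
Proof.
move=> fT xf yf zf xy yz xz.
by rewrite /is_flag -(card3_set3 (card_face fT) xf yf zf xy yz xz) fT xy yz xz.
Qed.

Lemma face_flag f : f \in T -> exists a b c, is_flag (a, b, c) /\ f = [set a; b; c].
Proof.
move=> fT; have /card_gt0P [a af] : 0 < #|f| by rewrite card_face.
have /card_gt0P [b /setD1P [ba bf]] : 0 < #|f :\ a|.
  by move: (card_face fT); rewrite (cardsD1 a) af add1n => -[->].
have ab : a != b by rewrite eq_sym.
have [c [cf ca cb Ef]] := card3_third (card_face fT) af bf ab.
by exists a, b, c; split=> //; apply: (flag_of_face fT); rewrite // eq_sym.
Qed.

Lemma other_face x y z : is_flag (x, y, z) ->
  exists f, [set f in T | [set y; z] \subset f] :\ [set x; y; z] = [set f].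
Proof.
move=> xyz; have /card_edge_faces := is_flag_edge (is_flag_rot xyz).
rewrite (cardsD1 [set x; y; z]) inE; case/and4P: (xyz) => -> _ _ _.
have -> : [set y; z] \subset [set x; y; z].
  by apply/subsetP=> u /set2P [] ->; rewrite !inE eqxx ?orbT.
by move=> [] /eqP /cards1P.
Qed.

Lemma opposite_face x y z w : is_flag (x, y, z) -> is_opposite x y z w ->
  [set y; z; w] \in [set f in T | [set y; z] \subset f] :\ [set x; y; z].
Proof.
move=> /and4P [_ xy yz xz] /and4P [yzwT wx wy wz]; rewrite !inE yzwT /=.
rewrite (_ : _ \subset _) ?andbT; last first.
  by apply/subsetP=> u /set2P [] ->; rewrite !inE eqxx ?orbT.
apply: contra wx => /eqP E; have : w \in [set x; y; z] by rewrite -E !inE eqxx orbT.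
by rewrite in_set3 (negbTE wy) (negbTE wz) !orbF.
Qed.

Lemma opposite_exists x y z : is_flag (x, y, z) -> exists w, is_opposite x y z w.
Proof.
move=> xyz; have [f Ef] := other_face xyz.
have : f \in [set f in T | [set y; z] \subset f] :\ [set x; y; z] by rewrite Ef set11.
rewrite !inE => /andP [fX /andP [fT yzf]].
have yf : y \in f by apply: (subsetP yzf); rewrite !inE eqxx.
have zf : z \in f by apply: (subsetP yzf); rewrite !inE eqxx orbT.
case/and4P: xyz => _ _ yz _; have [w [wf wy wz Ef']] := card3_third (card_face fT) yf zf yz.
exists w; apply/and4P; split; rewrite -?Ef' //.
by apply: contra fX => /eqP wx; rewrite Ef' wx -set3_rot.
Qed.

Lemma opposite_unique x y z w1 w2 : is_flag (x, y, z) ->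
  is_opposite x y z w1 -> is_opposite x y z w2 -> w1 = w2.
Proof.
move=> xyz w1P w2P; have [f Ef] := other_face xyz.
have := opposite_face xyz w1P; have := opposite_face xyz w2P.
rewrite Ef => /set1P E2 /set1P; rewrite -E2 => E12.
have : w1 \in [set y; z; w2] by rewrite -E12 !inE eqxx orbT.
by case/and4P: w1P => _ _ w1y w1z; rewrite in_set3 (negbTE w1y) (negbTE w1z) => /eqP.
Qed.

Lemma oppositeP x y z : is_flag (x, y, z) -> is_opposite x y z (opposite x y z).
Proof.
move=> xyz; rewrite /opposite; case: pickP => [w //|none].
by have [w wP] := opposite_exists xyz; move: (none w); rewrite wP.
Qed.

Lemma opposite_eq x y z w : is_flag (x, y, z) -> is_opposite x y z w -> opposite x y z = w.
Proof. by move=> xyz; apply: opposite_unique xyz (oppositeP xyz). Qed.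

Lemma zstepE x y z : is_flag (x, y, z) -> zstep (x, y, z) = (y, z, opposite x y z).
Proof. by rewrite /zstep => ->. Qed.

Lemma zstep_nonflag s : ~~ is_flag s -> zstep s = s.
Proof. by case: s => [[x y] z]; rewrite /zstep => /negbTE ->. Qed.

Lemma is_flag_zstep s : is_flag s -> is_flag (zstep s).
Proof.
case: s => [[x y] z] xyz; rewrite zstepE //.
case/and4P: (oppositeP xyz) => yzwT wx wy wz; case/and4P: xyz => _ _ yz _.
by apply/and4P; split; rewrite // eq_sym.
Qed.

Lemma zstep_flip s : is_flag s -> zstep (flip (zstep s)) = flip s.
Proof.
case: s => [[x y] z] xyz; have := is_flag_flip (is_flag_zstep xyz).
rewrite zstepE //= => wzy; rewrite zstepE //; congr (_, _, _); apply: opposite_eq => //.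
case/and4P: (oppositeP xyz) => _ wx _ _; case/and4P: xyz => xyzT xy yz xz.
by rewrite /is_opposite -set3_rev xyzT eq_sym wx xz xy.
Qed.

Lemma zstep_inj : injective zstep.
Proof.
move=> s1 s2 E; have [f1|nf1] := boolP (is_flag s1); have [f2|nf2] := boolP (is_flag s2).
- by apply: (can_inj flipK); rewrite -(zstep_flip f1) -(zstep_flip f2) E.
- by move: (is_flag_zstep f1); rewrite E zstep_nonflag // (negbTE nf2).
- by move: (is_flag_zstep f2); rewrite -E zstep_nonflag // (negbTE nf1).
- by rewrite -(zstep_nonflag nf1) -(zstep_nonflag nf2).
Qed.

Lemma zstep_shift s : is_flag s -> (zstep s).1.1 = s.1.2 /\ (zstep s).1.2 = s.2.
Proof. by case: s => [[x y] z] xyz; rewrite zstepE. Qed.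

Lemma is_flag_iter k s : is_flag s -> is_flag (iter k zstep s).
Proof. by move=> fs; elim: k => //= k; apply: is_flag_zstep. Qed.

Lemma zstep_fconnect_sym : connect_sym (frel zstep).
Proof. exact: fconnect_sym zstep_inj. Qed.

Implicit Types (x : W) (u : seq W) (r s : flag).

Definition zz_seq r : seq W := map (fun s : flag => s.1.1) (orbit zstep r).

Definition flag_at x u k : flag := (cyc x u k, cyc x u k.+1, cyc x u k.+2).

Lemma size_zz_seq r : size (zz_seq r) = order zstep r.
Proof. by rewrite size_map size_orbit. Qed.

Lemma iter_zstep_mod r k : iter k zstep r = iter (k %% order zstep r) zstep r.
Proof.
rewrite {1}(divn_eq k (order zstep r)) addnC iterD; congr iter.
by elim: (k %/ _) => //= q IHq; rewrite mulSn iterD IHq (iter_order zstep_inj).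
Qed.

Lemma cyc_zz_seq x r k : cyc x (zz_seq r) k = (iter k zstep r).1.1.
Proof.
have lt_k := ltn_pmod k (order_gt0 zstep r).
by rewrite /cyc size_zz_seq iter_zstep_mod (nth_map r) ?size_orbit // nth_traject.
Qed.

Lemma flag_at_zz_seq x r k : is_flag r -> flag_at x (zz_seq r) k = iter k zstep r.
Proof.
move=> fr; rewrite /flag_at !cyc_zz_seq !iterS; have fk := is_flag_iter k fr.
case: (zstep_shift fk) (zstep_shift (is_flag_zstep fk)) => -> -> [-> _].
by case: (iter k zstep r) => [[]].
Qed.

Lemma flag_at_rot x u k : k <= size u -> flag_at x (rot k u) 0 = flag_at x u k.
Proof. by move=> le_k; rewrite /flag_at !cyc_rot // add0n !addSn. Qed.

Lemma order_zstep_gt1 r : is_flag r -> 1 < order zstep r.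
Proof.
move=> fr; rewrite ltn_neqAle order_gt0 andbT eq_sym; apply/eqP=> order1.
have := iter_order zstep_inj r; rewrite order1 /=; clear order1.
by case: r fr => [[a b] c] /[dup] /and4P [_ ab _ _] /zstepE -> [ba _ _]; rewrite ba eqxx in ab.
Qed.

Lemma order_iter_zstep r j : order zstep (iter j zstep r) = order zstep r.
Proof.
apply: eq_card => s; have r_j := fconnect_iter zstep j r; apply/idP/idP.
  exact: connect_trans.
by apply: connect_trans; rewrite zstep_fconnect_sym.
Qed.

Lemma zz_seq_iter r j : is_flag r -> j < order zstep r ->
  zz_seq (iter j zstep r) = rot j (zz_seq r).
Proof.
move=> fr lt_j; apply: (@eq_from_nth _ r.1.1).
  by rewrite size_rot !size_zz_seq order_iter_zstep.
move=> i; rewrite size_zz_seq order_iter_zstep => lt_i.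
rewrite -cyc_small ?size_zz_seq ?order_iter_zstep // -cyc_small ?size_rot ?size_zz_seq //.
by rewrite cyc_rot ?size_zz_seq ?(ltnW lt_j) // !cyc_zz_seq iterD.
Qed.

Lemma ceq_zz_seq x u r : is_flag r -> ceq u (zz_seq r) ->
  exists2 k, k < size u & flag_at x u k = r.
Proof.
move=> fr /hasP [k]; rewrite mem_iota add0n => /andP [_ lt_k] /eqP E.
by exists k; rewrite // -flag_at_rot ?(ltnW lt_k) // E flag_at_zz_seq.
Qed.

Lemma steps_zz_seq r : is_flag r ->
  steps (zz_seq r) = map (fun s : flag => s.1) (orbit zstep r).
Proof.
move=> fr; have lt1 := order_zstep_gt1 fr.
apply: (@eq_from_nth _ (r.1.1, r.1.1)).
  by rewrite size_zip size_rot minnn size_map size_zz_seq size_orbit.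
move=> i; rewrite size_zip size_rot minnn size_zz_seq => lt_i.
rewrite nth_zip ?size_rot // (nth_map r) ?size_orbit // nth_traject //.
rewrite -cyc_small ?size_zz_seq // -cyc_small ?size_rot ?size_zz_seq //.
rewrite cyc_rot ?size_zz_seq ?(ltnW lt1) // !cyc_zz_seq addn1 iterS.
by case: (zstep_shift (is_flag_iter i fr)) => -> _; case: (iter i zstep r) => [[]].
Qed.

Definition zz_cond (a b c d : W) :=
  [&& is_edge T [set a; b], is_edge T [set b; c], [set a; b] != [set b; c],
      [exists f in T, [set a; b] :|: [set b; c] \subset f],
      [set a; b] :|: [set b; c] != [set b; c] :|: [set c; d],
      is_edge T (([set a; b] :|: [set b; c]) :&: ([set b; c] :|: [set c; d]))
    & [disjoint [set a; b] & [set c; d]]].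

Lemma zz_localE x u i :
  zz_local T x u i = zz_cond (cyc x u i) (cyc x u i.+1) (cyc x u i.+2) (cyc x u i.+3).
Proof. by []. Qed.

Lemma is_edge_neq a b : is_edge T [set a; b] -> a != b.
Proof. by case/andP; rewrite cards2; case: (a != b). Qed.

Lemma zz_cond_opposite a b c : is_flag (a, b, c) -> zz_cond a b c (opposite a b c).
Proof.
move=> abc; have := oppositeP abc; set d := opposite a b c.
case/and4P=> _ da db dc; have ab_edge := is_flag_edge abc.
have bc_edge := is_flag_edge (is_flag_rot abc).
case/and4P: abc => abcT ab bc ac; rewrite /zz_cond ab_edge bc_edge set2U_chain.
have -> : [set a; b] != [set b; c].
  apply: contra ab => /eqP E; have : a \in [set b; c] by rewrite -E set21.
  by rewrite !inE (negbTE ac) orbF.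
have -> : [exists f in T, [set a; b; c] \subset f].
  by apply/existsP; exists [set a; b; c]; rewrite abcT /=.
rewrite set2U_chain; have -> : [set a; b; c] != [set b; c; d].
  apply: contra da => /eqP E; have : a \in [set b; c; d] by rewrite -E !inE eqxx.
  by rewrite in_set3 (negbTE ab) (negbTE ac) eq_sym.
have -> : [set a; b; c] :&: [set b; c; d] = [set b; c].
  apply/setP=> u; rewrite in_setI !in_set3 !inE.
  by case: (eqVneq u b) => //= _; case: (eqVneq u c) => //= _;
    case: eqVneq => // ->; rewrite eq_sym (negbTE da).
rewrite bc_edge /= disjoint_subset; apply/subsetP=> u /set2P [] ->; rewrite !inE negb_or.
  by rewrite ac eq_sym da.
by rewrite bc eq_sym db.
Qed.

Lemma zz_cond_flag a b c d : zz_cond a b c d -> is_flag (a, b, c).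
Proof.
case/and4P=> /is_edge_neq ab /is_edge_neq bc abbc /and4P [/existsP [f /andP [fT abcf]] _ _ _].
have ac : a != c by apply: contra abbc => /eqP ->; rewrite setUC.
rewrite set2U_chain in abcf.
by apply: (flag_of_face fT) => //; apply: (subsetP abcf); rewrite !inE eqxx ?orbT.
Qed.

Lemma zz_cond_opposite_eq a b c d e : zz_cond a b c d -> zz_cond b c d e -> d = opposite a b c.
Proof.
move=> abcd bcde; apply/esym/opposite_eq; first exact: zz_cond_flag abcd.
case/and4P: (zz_cond_flag bcde) => bcdT bc cd bd.
have da : d != a.
  apply: contraTneq abcd => ->; rewrite /zz_cond !set2U_chain.
  by rewrite -(set3_rot a b c) eqxx !andbF.
by rewrite /is_opposite bcdT da eq_sym bd eq_sym cd.
Qed.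

Definition zz_chain x u :=
  forall i, is_flag (flag_at x u i) /\ flag_at x u i.+1 = zstep (flag_at x u i).

Lemma zz_chain_iter x u : zz_chain x u ->
  forall k, flag_at x u k = iter k zstep (flag_at x u 0).
Proof. by move=> chain; elim=> [|k IHk] //; rewrite iterS -IHk; case: (chain k). Qed.

Lemma zz_local_all x u : 0 < size u -> (forall i : 'I_(size u), zz_local T x u i) ->
  forall i, zz_local T x u i.
Proof.
move=> u_gt0 zz_u i; have := zz_u (Ordinal (ltn_pmod i u_gt0)); rewrite !zz_localE /=.
have shift m : cyc x u (i %% size u + m) = cyc x u (i + m).
  by apply: eq_cyc_mod; rewrite modnDml.
move: (shift 0) (shift 1) (shift 2) (shift 3).
by rewrite !addn0 !addn1 !addn2 !addn3 => -> -> -> ->.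
Qed.

Lemma zigzag_chain x u : is_zigzag T u -> zz_chain x u.
Proof.
case: u => [|y u'] // /andP [/forallP zz_u _] i; set u := y :: u'.
have zz := zz_local_all (isT : 0 < size u) zz_u.
rewrite /flag_at !(@cyc_default _ x y) //.
have abcd := zz (i); have bcde := zz i.+1; rewrite !zz_localE in abcd bcde.
have abc := zz_cond_flag abcd; split=> //.
by rewrite zstepE // -(zz_cond_opposite_eq abcd bcde).
Qed.

Lemma order_zz_chain x u : 0 < size u -> zz_chain x u ->
  (forall k, 0 < k < size u -> rot k u != u) -> order zstep (flag_at x u 0) = size u.
Proof.
set r := flag_at x u 0; move=> u_gt0 chain aperiodic.
have iter_size : iter (size u) zstep r = r.
  rewrite -zz_chain_iter // /r /flag_at.
  have cyc_size k : cyc x u (size u + k) = cyc x u k by apply: eq_cyc_mod; rewrite modnDl.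
  by rewrite -(cyc_size 0) -(cyc_size 1) -(cyc_size 2) addn0 addn1 addn2.
apply/eqP; rewrite eqn_leq; apply/andP; split; rewrite leqNgt; apply/negP.
  by move/findex_iter; rewrite iter_size findex0 => u0; rewrite -u0 in u_gt0.
move=> lt_order; suff : rot (order zstep r) u == u.
  by apply/negP/aperiodic; rewrite order_gt0 lt_order.
apply/eqP/(@eq_from_nth _ x); rewrite size_rot // => i lt_i.
rewrite -!cyc_small ?size_rot // cyc_rot ?(ltnW lt_order) //.
have cyc_iter k : cyc x u k = (iter k zstep r).1.1 by rewrite -zz_chain_iter.
by rewrite (cyc_iter i) cyc_iter iterD (iter_order zstep_inj).
Qed.

Lemma zz_chain_seq x u : 0 < size u -> zz_chain x u ->
  (forall k, 0 < k < size u -> rot k u != u) -> u = zz_seq (flag_at x u 0).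
Proof.
move=> u_gt0 chain aperiodic; have order_u := order_zz_chain u_gt0 chain aperiodic.
apply: (@eq_from_nth _ x); first by rewrite size_zz_seq order_u.
move=> i lt_i; rewrite -cyc_small // -[nth x _ i]cyc_small ?size_zz_seq ?order_u //.
by rewrite cyc_zz_seq -zz_chain_iter.
Qed.

Lemma zz_seq_zigzag r : is_flag r -> is_zigzag T (zz_seq r).
Proof.
move=> fr; have size_r := size_zz_seq r; have order_gt0r := order_gt0 zstep r.
case E: (zz_seq r) => [|y u']; first by rewrite -size_r E in order_gt0r.
rewrite /is_zigzag -E; apply/andP; split.
  apply/forallP=> i; rewrite zz_localE.
  have := flag_at_zz_seq y i fr; have := flag_at_zz_seq y i.+1 fr; rewrite iterS /flag_at.
  case: (iter i zstep r) (is_flag_iter i fr) => [[a b] c] abc.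
  by rewrite zstepE // => -[_ _ ->] [-> -> ->]; apply: zz_cond_opposite.
apply/forallP=> k; apply/implyP=> k_gt0; apply/eqP=> rot_k.
have le_k : k <= size (zz_seq r) by rewrite ltnW.
have := flag_at_rot y le_k; rewrite rot_k !flag_at_zz_seq // => r_k.
have lt_k : k < order zstep r by rewrite -size_r.
by move: k_gt0; rewrite -(findex_iter lt_k) -r_k findex0.
Qed.

Lemma zigzag_zz_seq x u : is_zigzag T u ->
  is_flag (flag_at x u 0) /\ u = zz_seq (flag_at x u 0).
Proof.
move=> zz_u; have chain := zigzag_chain x zz_u; split; first by case: (chain 0).
apply: zz_chain_seq => //; case: u zz_u {chain} => [|y u'] // /andP [_ /forallP aper].
move=> k /andP [k_gt0 lt_k].
by have := aper (Ordinal lt_k); rewrite /= k_gt0.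
Qed.

Lemma zigzag_rev u : is_zigzag T u -> is_zigzag T (rev u).
Proof.
case: u => [|y u'] // zz_u; set u := y :: u' in zz_u *; set m := size u'.
have size_u : size u = m.+1 by [].
have chain := zigzag_chain y zz_u.
have cyc_shift a b c : a = b + c * m.+1 -> cyc y u a = cyc y u b.
  by move=> ->; apply: eq_cyc_mod; rewrite size_u addnC modnMDl.
have flag_at_rev i : flag_at y (rev u) i = flip (flag_at y u (m * i.+3)).
  rewrite /flag_at !(cyc_rev _ _ size_u); congr (_, _, _).
    by apply/esym/(cyc_shift _ _ 2); lia.
  by apply/esym/(cyc_shift _ _ 1); lia.
have chain_rev : zz_chain y (rev u).
  move=> i; rewrite !flag_at_rev; split.
    by apply: is_flag_flip; case: (chain (m * i.+3)).
  have -> : flag_at y u (m * i.+3) = flag_at y u (m * i.+4).+1.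
    by rewrite /flag_at; congr (_, _, _); apply/esym/(cyc_shift _ _ 1); lia.
  by case: (chain (m * i.+4)) => fl ->; rewrite zstep_flip.
have aperiodic k : 0 < k < size (rev u) -> rot k (rev u) != rev u.
  rewrite size_rev => /andP [k_gt0 lt_k]; apply/negP=> /eqP rot_k.
  have : rot (size u - k) u = u by rewrite -[rot _ u]revK -/(rotr k u) rev_rotr rot_k revK.
  have lt_uk : size u - k < size u by lia.
  case/andP: zz_u => _ /forallP /(_ (Ordinal lt_uk)) /= aper rot_uk.
  by move: aper; rewrite rot_uk eqxx implybF; lia.
rewrite (zz_chain_seq _ chain_rev aperiodic) ?size_rev //.
by apply: zz_seq_zigzag; case: (chain_rev 0).
Qed.

Lemma zz_seq_connect r s : is_flag r -> fconnect zstep r s -> ceq (zz_seq s) (zz_seq r).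
Proof.
move=> fr /fconnect_iter_findex [j lt_j ->]; rewrite zz_seq_iter //.
by apply: ceq_rot; rewrite size_zz_seq.
Qed.

(** * Directed relations and z-orientations of type II *)

Definition directed_faces (d : rel W) :=
  forall x y z, is_flag (x, y, z) -> d x y != d y x /\ (d x y -> d y z).

Section DirectedFaces.
Variable d : rel W.
Hypothesis d_directed : directed_faces d.

Lemma dir_antisym x y z : is_flag (x, y, z) -> d x y != d y x.
Proof. by case/d_directed. Qed.

Lemma dir_cyclic x y z : is_flag (x, y, z) -> d x y -> d y z.
Proof. by case/d_directed. Qed.

Lemma dir_rot x y z : is_flag (x, y, z) -> d y z = d x y.
Proof.
move=> xyz; apply/idP/idP; last exact: dir_cyclic xyz.
have yzx := is_flag_rot xyz; by move/(dir_cyclic yzx)/(dir_cyclic (is_flag_rot yzx)).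
Qed.

Lemma flag_cyclic_on a b c : is_flag (a, b, c) -> cyclic_on d a b c.
Proof.
move=> abc; have bca := is_flag_rot abc; have cab := is_flag_rot bca.
have bc := dir_rot abc; have ca : d c a = d a b by rewrite (dir_rot bca).
have := dir_antisym abc; have := dir_antisym bca; have := dir_antisym cab.
by rewrite /cyclic_on bc ca; case: (d a b); case: (d b a); case: (d c b); case: (d a c).
Qed.

Lemma directed_faces_rev : directed_faces (fun x y => d y x).
Proof.
move=> x y z xyz; split; first by rewrite eq_sym; exact: dir_antisym xyz.
by rewrite -(dir_rot (is_flag_flip xyz)).
Qed.

Definition forward (s : flag) := d s.1.1 s.1.2.

Lemma forward_iter k s : is_flag s -> forward (iter k zstep s) = forward s.
Proof.
move=> fs; elim: k => //= k <-; have := is_flag_iter k fs.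
by case: (iter k zstep s) => [[x y] z] xyz; rewrite zstepE // /forward /= (dir_rot xyz).
Qed.

Definition zz_reps := [pred r : flag | [&& is_flag r, forward r & froots zstep r]].

Definition zorient := [seq zz_seq r | r <- enum zz_reps].

Lemma froot_zz_reps s : is_flag s -> forward s -> froot zstep s \in zz_reps.
Proof.
move=> fs fws; have [k _ E] := fconnect_iter_findex (connect_root (frel zstep) s).
by rewrite inE /= (roots_root zstep_fconnect_sym) andbT E is_flag_iter // forward_iter.
Qed.

Lemma has_ceq_zorient x u : is_zigzag T u -> has (ceq u) zorient = forward (flag_at x u 0).
Proof.
move=> zz_u; have [fu Eu] := zigzag_zz_seq x zz_u; set r := flag_at x u 0 in fu Eu *.
apply/hasP/idP => [[t /mapP [s]] | fwr].
  rewrite mem_enum => /and3P [fs fws _] -> /(ceq_zz_seq x fs) [k _ r_k].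
  by rewrite -(forward_iter k fu) -zz_chain_iter ?r_k //; exact: zigzag_chain.
exists (zz_seq (froot zstep r)); first by rewrite map_f // mem_enum froot_zz_reps.
rewrite Eu; apply: zz_seq_connect; first by case/and3P: (froot_zz_reps fu fwr).
by rewrite zstep_fconnect_sym connect_root.
Qed.

(* The first step of [rev u] is a step of [u] reversed, so by antisymmetry
   exactly one of [u] and [rev u] starts forward. *)
Lemma zorient_xor u : is_zigzag T u -> has (ceq u) zorient (+) has (ceq (rev u)) zorient.
Proof.
case: u => [|x u'] // zz_u; set u := x :: u' in zz_u *; set m := size u'.
have size_u : size u = m.+1 by [].
rewrite (has_ceq_zorient x zz_u) (has_ceq_zorient x (zigzag_rev zz_u)).
have chain := zigzag_chain x zz_u; have [fm _] := chain (m * 2).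
have -> : forward (flag_at x u 0) = forward (flag_at x u (m * 2)).
  by rewrite (zz_chain_iter chain (m * 2)) forward_iter //; case: (chain 0).
rewrite /forward /flag_at /= !(cyc_rev _ _ size_u).
have -> : cyc x u (m * 1) = cyc x u (m * 2).+1.
  by apply: eq_cyc_mod; rewrite size_u (_ : (m * 2).+1 = 1 * m.+1 + m * 1) ?modnMDl //; lia.
by move: (dir_antisym fm); case: (d _ _); case: (d _ _).
Qed.

Lemma zorient_zigzag : all (is_zigzag T) zorient.
Proof.
by apply/allP=> t /mapP [r]; rewrite mem_enum => /and3P [fr _ _] ->; apply: zz_seq_zigzag.
Qed.

Lemma zorient_uniq i j : i < size zorient -> j < size zorient -> i != j ->
  ~~ ceq (nth [::] zorient i) (nth [::] zorient j).
Proof.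
rewrite size_map => lt_i lt_j; apply: contra => ceq_ij.
have [r0 _] : exists r0 : flag, True by case: (enum zz_reps) lt_i => [|r0 _] //; exists r0.
rewrite !(nth_map r0) // in ceq_ij; rewrite -(nth_uniq r0 lt_i lt_j (enum_uniq _)).
set ri := nth r0 _ i in ceq_ij *; set rj := nth r0 _ j in ceq_ij *.
have /and3P [fi _ /eqP root_i] : ri \in zz_reps by rewrite -mem_enum mem_nth.
have /and3P [fj _ /eqP root_j] : rj \in zz_reps by rewrite -mem_enum mem_nth.
have [k _] := ceq_zz_seq r0.1.1 fj ceq_ij; rewrite flag_at_zz_seq // => rj_k.
rewrite -root_i -root_j; apply/eqP/(rootP zstep_fconnect_sym).
by rewrite -rj_k fconnect_iter.
Qed.

Lemma count_orbit (P : pred flag) r :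
  count P (orbit zstep r) = \sum_s ((s \in orbit zstep r) && P s).
Proof.
rewrite -sum1_count big_mkcond /= big_uniq ?orbit_uniq // big_mkcond /=.
by apply: eq_bigr => s _; case: (s \in _); case: (P s).
Qed.

Lemma sum_zz_reps_orbit s : \sum_(r in zz_reps) (s \in orbit zstep r) = is_flag s && forward s.
Proof.
have [/andP [fs fws] | not_fw] := boolP (is_flag s && forward s).
  rewrite (bigD1 (froot zstep s)) ?froot_zz_reps //= big1 ?addn0.
    by rewrite -fconnect_orbit zstep_fconnect_sym connect_root.
  move=> r /andP [/and3P [_ _ /eqP root_r] not_root]; apply/eqP; rewrite eqb0.
  apply: contra not_root; rewrite -fconnect_orbit -{2}root_r.
  by move/(rootP zstep_fconnect_sym) ->.
rewrite big1 // => r /and3P [fr fwr _]; apply/eqP; rewrite eqb0; apply: contra not_fw.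
rewrite -fconnect_orbit => /fconnect_iter_findex [k _ ->].
by rewrite is_flag_iter ?forward_iter.
Qed.

Lemma trav_zorient a b :
  trav zorient a b = #|[set s | [&& is_flag s, forward s & s.1 == (a, b)]]|.
Proof.
rewrite /trav big_map big_enum /=.
under eq_bigr => r /and3P [fr _ _].
  by rewrite -/(steps _) steps_zz_seq // count_map count_orbit; over.
rewrite exchange_big -sum1_card [in RHS]big_mkcond /=; apply: eq_bigr => s _.
rewrite inE andbA; case: (s.1 == (a, b)); last by rewrite andbF big1 // => r _; rewrite andbF.
by under eq_bigr do rewrite andbT; rewrite sum_zz_reps_orbit andbT; case: (_ && _).
Qed.

Lemma card_flags_on_edge x y z : is_flag (x, y, z) -> #|[set w | is_flag (x, y, w)]| = 2.
Proof.
move=> xyz; have := card_edge_faces (is_flag_edge xyz).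
have w_inj : {in [set w | is_flag (x, y, w)] &, injective (fun w => [set x; y; w])}.
  move=> w1 w2; rewrite !inE => /and4P [_ _ yw1 xw1] _ E12.
  have : w1 \in [set x; y; w2] by rewrite -E12 !inE eqxx orbT.
  by rewrite in_set3 eq_sym (negbTE xw1) eq_sym (negbTE yw1) => /eqP.
move <-; rewrite -(card_in_imset w_inj); apply: eq_card => f.
rewrite [in RHS]inE; apply/imsetP/andP => [[w] | [fT xyf]].
  rewrite inE => /and4P [xywT _ _ _] ->; split=> //.
  by apply/subsetP=> u /set2P [] ->; rewrite !inE eqxx ?orbT.
have xf : x \in f by apply: (subsetP xyf); rewrite !inE eqxx.
have yf : y \in f by apply: (subsetP xyf); rewrite !inE eqxx orbT.
case/and4P: xyz => _ xy _ _; have [w [wf wx wy ->]] := card3_third (card_face fT) xf yf xy.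
by exists w; rewrite // inE (flag_of_face fT) // 1?eq_sym.
Qed.

Lemma trav_zorient_flag x y z : is_flag (x, y, z) -> trav zorient x y = if d x y then 2 else 0.
Proof.
move=> xyz; rewrite trav_zorient; case: ifPn => dxy.
  have flag_inj : injective (fun w : W => (x, y, w)) by move=> w1 w2 [].
  rewrite -(card_flags_on_edge xyz) -(card_imset _ flag_inj).
  apply: eq_card => s; rewrite !inE; apply/and3P/imsetP => [[fs _ /eqP s1] | [w]].
    by exists s.2; rewrite ?inE -s1; case: s fs {s1} => [[]].
  by rewrite inE => xyw ->; split; rewrite /forward //= eqxx.
apply/eqP; rewrite cards_eq0; apply/eqP/setP=> s; rewrite !inE.
by apply/negbTE; apply: contra dxy => /and3P [_]; rewrite /forward => /[swap] /eqP ->.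
Qed.

Lemma zorient_typeII : all_faces_typeII T zorient.
Proof.
move=> f fT x y xf yf xy; have [z [zf zx zy Ef]] := card3_third (card_face fT) xf yf xy.
have xyz : is_flag (x, y, z) by rewrite (flag_of_face fT) // eq_sym.
have yxz : is_flag (y, x, z) by rewrite (flag_of_face fT) // eq_sym.
rewrite /edge_typeII (trav_zorient_flag xyz) (trav_zorient_flag yxz).
by move: (dir_antisym xyz); case: (d x y); case: (d y x).
Qed.

Lemma zorient_z_orientation : z_orientation T zorient.
Proof. by split; [exact: zorient_zigzag | exact: zorient_uniq | exact: zorient_xor]. Qed.

End DirectedFaces.

Section TypeIIOrientation.
Variable tau : seq (seq W).
Hypothesis z_orient_tau : z_orientation T tau.
Hypothesis typeII_tau : all_faces_typeII T tau.

Definition dir_of a b := trav tau a b == 2.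

Lemma edge_typeII_flag x y z : is_flag (x, y, z) -> edge_typeII tau x y.
Proof.
by case/and4P=> xyzT xy _ _; apply: (typeII_tau xyzT) => //; rewrite !inE eqxx ?orbT.
Qed.

Lemma dir_of_antisym x y z : is_flag (x, y, z) -> dir_of x y != dir_of y x.
Proof. by rewrite /dir_of => /edge_typeII_flag /orP [] /andP [/eqP -> /eqP ->]. Qed.

Lemma dir_of_trav x y z : is_flag (x, y, z) -> 0 < trav tau x y -> dir_of x y.
Proof. by rewrite /dir_of => /edge_typeII_flag /orP [] /andP [/eqP -> _]. Qed.

Lemma trav_gt0 t a b : t \in tau -> (a, b) \in steps t -> 0 < trav tau a b.
Proof.
move=> t_tau ab_t; rewrite /trav (big_rem t t_tau) /=.
apply: leq_trans (leq_addr _ _); rewrite -has_count; apply/hasP.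
by exists (a, b); [exact: ab_t | exact: eqxx].
Qed.

(* Either tau contains a rotation of the zigzag through (x, y, z), which
   traverses yz from y to z, or a rotation of its reverse, which traverses xy
   from y to x against dir_of. *)
Lemma dir_of_cyclic x y z : is_flag (x, y, z) -> dir_of x y -> dir_of y z.
Proof.
move=> xyz dxy; set s := zz_seq (x, y, z).
have s_gt0 : 0 < size s by rewrite size_zz_seq order_gt0.
have [s0 s1 s2] : [/\ cyc x s 0 = x, cyc x s 1 = y & cyc x s 2 = z].
  by have := flag_at_zz_seq x 0 xyz; rewrite /flag_at => -[-> -> ->].
case: z_orient_tau => _ _ /(_ s (zz_seq_zigzag xyz)).
case: (boolP (has (ceq s) tau)) => [/hasP [t t_tau ceq_st] _ | _ /hasP [t t_tau ceq_st]].
  apply: (dir_of_trav (is_flag_rot xyz)); apply: (trav_gt0 t_tau).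
  by rewrite -s1 -s2; apply: ceq_cyc_in_steps.
have yxz : is_flag (y, x, z).
  by case/and4P: xyz => xyzT xy yz xz; rewrite /is_flag -set3C12 xyzT eq_sym xy yz xz.
have := dir_of_antisym xyz; rewrite dxy (dir_of_trav yxz) //; apply: (trav_gt0 t_tau).
by rewrite -s0 -s1; apply: ceq_rev_cyc_in_steps.
Qed.

Lemma dir_of_directed : directed_faces dir_of.
Proof. by move=> x y z xyz; split; [exact: dir_of_antisym xyz | exact: dir_of_cyclic]. Qed.

End TypeIIOrientation.

End ZigzagStep.

(** * Connected sums *)

Section InjectiveImage.
Variables (A B : finType) (h : A -> B).

Lemma subset_imsetT (f : {set A}) : h @: f \subset h @: setT.
Proof. exact/imsetS/subsetT. Qed.

Hypothesis h_inj : injective h.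

Lemma subset_imset_inj (e : {set B}) (f : {set A}) :
  (e \subset h @: f) = (e \subset h @: setT) && (h @^-1: e \subset f).
Proof.
apply/idP/andP => [e_hf | [e_h pre_f]].
  split; first exact: subset_trans e_hf (subset_imsetT f).
  by apply/subsetP=> x; rewrite inE => /(subsetP e_hf) /imsetP [y yf /h_inj ->].
apply/subsetP=> p pe; have /imsetP [x _ Ep] := subsetP e_h _ pe; rewrite Ep in pe *.
by apply: imset_f; apply: (subsetP pre_f); rewrite inE.
Qed.

Lemma card_preimset (e : {set B}) : e \subset h @: setT -> #|h @^-1: e| = #|e|.
Proof.
move=> e_h; rewrite -(card_imset _ h_inj); apply: eq_card => p.
apply/imsetP/idP => [[x] | pe]; first by rewrite inE => xe ->.
by have /imsetP [x _ Ep] := subsetP e_h _ pe; exists x; rewrite // inE -Ep.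
Qed.

Lemma is_edge_preimset (S : {set {set A}}) (f : {set A}) (e : {set B}) :
  #|e| = 2 -> f \in S -> e \subset h @: f -> is_edge S (h @^-1: e).
Proof.
move=> e2 fS; rewrite subset_imset_inj => /andP [e_h pre_f].
by rewrite /is_edge card_preimset // e2; apply/existsP; exists f; rewrite fS.
Qed.

Variables (S : {set {set A}}) (F0 : {set A}).
Hypothesis F0S : F0 \in S.
Hypothesis card_edge_faces : forall e, is_edge S e -> #|[set f in S | e \subset f]| = 2.

Lemma card_faces_imsetD1 (e : {set B}) : e \subset h @: setT -> is_edge S (h @^-1: e) ->
  #|[set f in S :\ F0 | e \subset h @: f]| = 2 - (h @^-1: e \subset F0).
Proof.
move=> e_h /card_edge_faces <-; rewrite (cardsD1 F0 [set f in S | _ \subset f]) inE F0S addKn.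
by apply: eq_card => f; rewrite !inE subset_imset_inj // e_h; case: eqP => // ->.
Qed.

Lemma card_faces_imset0 (e : {set B}) : ~~ (e \subset h @: setT) ->
  #|[set f in S :\ F0 | e \subset h @: f]| = 0.
Proof.
move=> e_nh; apply/eqP; rewrite cards_eq0; apply/eqP/setP=> f.
by rewrite !inE subset_imset_inj // (negbTE e_nh) andbF.
Qed.

End InjectiveImage.

Section ConnectedSum.
Variables (V V' : finType) (T : {set {set V}}) (T' : {set {set V'}}).
Variables (F : {set V}) (F' : {set V'}) (g : V -> V').
Hypothesis card_face : forall f, f \in T -> #|f| = 3.
Hypothesis card_edge_faces : forall e, is_edge T e -> #|[set f in T | e \subset f]| = 2.
Hypothesis card_face' : forall f, f \in T' -> #|f| = 3.
Hypothesis card_edge_faces' : forall e, is_edge T' e -> #|[set f in T' | e \subset f]| = 2.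
Hypothesis FT : F \in T.
Hypothesis FT' : F' \in T'.
Hypothesis gF : g @: F = F'.

Local Notation phi := (csum_vtx F g).
Local Notation T2 := (csum T T' F F' g).

Lemma g_injF : {in F &, injective g}.
Proof. by apply/imset_injP; rewrite gF card_face' // card_face. Qed.

Lemma inr_inj : injective (@inr V V'). Proof. by move=> x y []. Qed.

Lemma csum_vtx_inj : injective phi.
Proof.
move=> a b; rewrite /csum_vtx; case: ifP => aF; case: ifP => bF // [] //.
exact: g_injF.
Qed.

Lemma csum_vtxF a : a \in F -> phi a = inr (g a).
Proof. by rewrite /csum_vtx => ->. Qed.

Lemma csum_vtx_inr a b' : phi a = inr b' -> a \in F /\ b' = g a.
Proof. by rewrite /csum_vtx; case: ifP => // aF []. Qed.

Lemma csum_vtx_imsetF : phi @: F = inr @: F'.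
Proof. by rewrite -gF -imset_comp; apply: eq_in_imset => a /csum_vtxF. Qed.

Lemma in_csumP h : h \in T2 ->
  (exists2 f, f \in T :\ F & h = phi @: f) \/ (exists2 f', f' \in T' :\ F' & h = inr @: f').
Proof. by rewrite /csum inE => /orP [] /imsetP [f f_in ->]; [left | right]; exists f. Qed.

Lemma csum_card_face h : h \in T2 -> #|h| = 3.
Proof.
case/in_csumP=> [[f /setD1P [_ fT] ->] | [f /setD1P [_ fT] ->]].
  by rewrite card_imset ?card_face //; exact: csum_vtx_inj.
by rewrite card_imset ?card_face' //; exact: inr_inj.
Qed.

Lemma csum_faces_disjoint (f : {set V}) (f' : {set V'}) :
  f \in T :\ F -> phi @: f != inr @: f'.
Proof.
case/setD1P=> fF fT; apply: contra fF => /eqP E.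
have fsubF : f \subset F.
  apply/subsetP=> a af; have : phi a \in inr @: f' by rewrite -E imset_f.
  by case/imsetP=> b' _ /csum_vtx_inr [].
by rewrite eqEcard fsubF card_face // card_face.
Qed.

Lemma card_csum_faces (e : {set V + V'}) : #|[set h in T2 | e \subset h]| =
  #|[set f in T :\ F | e \subset phi @: f]| + #|[set f' in T' :\ F' | e \subset inr @: f']|.
Proof.
set SA := [set f in T :\ F | _]; set SB := [set f' in T' :\ F' | _].
set imA := [set phi @: f | f : {set V} in SA].
set imB := [set (@inr V V') @: f | f : {set V'} in SB].
have -> : [set h in T2 | e \subset h] = imA :|: imB.
  apply/setP=> h; rewrite !inE /csum ?inE; apply/andP/orP.
    case=> /orP [] /imsetP [f f_in ->] e_f; [left | right].
      by apply: imset_f; rewrite inE f_in.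
    by apply: imset_f; rewrite inE f_in.
  by case=> /imsetP [f]; rewrite inE => /andP [f_in e_f] ->; split=> //; apply/orP;
    [left | right]; apply: imset_f.
have disjAB : imA :&: imB = set0.
  apply/setP=> h; rewrite !inE; apply/negbTE/andP => -[/imsetP [f] + ->].
  rewrite inE => /andP [f_in _] /imsetP [f' _ /eqP].
  by rewrite (negbTE (csum_faces_disjoint f' f_in)).
rewrite cardsU disjAB cards0 subn0.
by rewrite (card_imset _ (imset_inj csum_vtx_inj)) (card_imset _ (imset_inj inr_inj)).
Qed.

Lemma csum_edge_phi e : is_edge T2 e -> ~~ (e \subset inr @: setT) ->
  [/\ e \subset phi @: setT, is_edge T (phi @^-1: e) & ~~ (phi @^-1: e \subset F)].
Proof.
case/andP=> /eqP e2 /existsP [h /andP [hT e_h]] e_ninr.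
case/in_csumP: hT e_h => [[f /setD1P [_ fT] ->] | [f _ ->]] e_f; last first.
  by move: e_ninr; rewrite (subset_trans e_f (subset_imsetT _ _)).
have e_phi := subset_trans e_f (subset_imsetT phi f).
split=> //; first exact: (is_edge_preimset csum_vtx_inj e2 fT e_f).
apply: contra e_ninr => eaF; apply: subset_trans (subset_imsetT inr F').
by rewrite -csum_vtx_imsetF (subset_imset_inj csum_vtx_inj) e_phi.
Qed.

Lemma csum_edge_inr e : is_edge T2 e -> ~~ (e \subset phi @: setT) ->
  [/\ e \subset inr @: setT, is_edge T' (inr @^-1: e) & ~~ (inr @^-1: e \subset F')].
Proof.
case/andP=> /eqP e2 /existsP [h /andP [hT e_h]] e_nphi.
case/in_csumP: hT e_h => [[f _ ->] | [f /setD1P [_ fT] ->]] e_f.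
  by move: e_nphi; rewrite (subset_trans e_f (subset_imsetT _ _)).
have e_inr := subset_trans e_f (subset_imsetT inr f).
split=> //; first exact: (is_edge_preimset inr_inj e2 fT e_f).
apply: contra e_nphi => ebF'; apply: subset_trans (subset_imsetT phi F).
by rewrite csum_vtx_imsetF (subset_imset_inj inr_inj) e_inr.
Qed.

Lemma csum_range_both (e : {set V + V'}) :
  e \subset phi @: setT -> e \subset inr @: setT -> e \subset phi @: F.
Proof.
move=> e_phi e_inr; apply/subsetP=> p pe.
have /imsetP [a _ Ea] := subsetP e_phi _ pe; have /imsetP [b' _ Eb] := subsetP e_inr _ pe.
by rewrite Ea imset_f //; case: (csum_vtx_inr (etrans (esym Ea) Eb)).
Qed.

Lemma csum_card_edge_faces e : is_edge T2 e -> #|[set h in T2 | e \subset h]| = 2.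
Proof.
move=> e_edge; rewrite card_csum_faces; have /andP [/eqP e2 _] := e_edge.
have [e_inr | e_ninr] := boolP (e \subset inr @: setT); last first.
  have [e_phi ea_edge eaF] := csum_edge_phi e_edge e_ninr.
  rewrite (card_faces_imset0 inr_inj _ _ e_ninr).
  by rewrite (card_faces_imsetD1 csum_vtx_inj FT card_edge_faces e_phi ea_edge) (negbTE eaF).
have [e_phi | e_nphi] := boolP (e \subset phi @: setT); last first.
  have [_ eb_edge ebF'] := csum_edge_inr e_edge e_nphi.
  rewrite (card_faces_imset0 csum_vtx_inj _ _ e_nphi).
  by rewrite (card_faces_imsetD1 inr_inj FT' card_edge_faces' e_inr eb_edge) (negbTE ebF').
have e_phiF := csum_range_both e_phi e_inr.
have e_inrF' : e \subset inr @: F' by rewrite -csum_vtx_imsetF.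
have ea_edge := is_edge_preimset csum_vtx_inj e2 FT e_phiF.
have eb_edge := is_edge_preimset inr_inj e2 FT' e_inrF'.
rewrite (card_faces_imsetD1 csum_vtx_inj FT card_edge_faces e_phi ea_edge).
rewrite (card_faces_imsetD1 inr_inj FT' card_edge_faces' e_inr eb_edge).
move: e_phiF e_inrF'; rewrite (subset_imset_inj csum_vtx_inj) (subset_imset_inj inr_inj).
by case/andP=> _ ->; case/andP=> _ ->.
Qed.

Lemma csum_flagP p q r : is_flag T2 (p, q, r) ->
  (exists a b c, [/\ is_flag T (a, b, c), p = phi a, q = phi b & r = phi c]) \/
  (exists a b c, [/\ is_flag T' (a, b, c), p = inr a, q = inr b & r = inr c]).
Proof.
case/and4P=> pqrT pq qr pr.
have pqr_in : [/\ p \in [set p; q; r], q \in [set p; q; r] & r \in [set p; q; r]].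
  by rewrite !inE !eqxx ?orbT.
case/in_csumP: pqrT pqr_in => [[f /setD1P [_ fT] ->] | [f /setD1P [_ fT] ->]] [pP qP rP];
  [left | right]; case/imsetP: pP pq pr => a af -> pq pr;
  case/imsetP: qP pq qr => b bf -> pq qr; case/imsetP: rP qr pr => c cf -> qr pr;
  exists a, b, c; split=> //.
  apply: (flag_of_face card_face fT) => //.
  - by apply: contra_neq pq => ->.
  - by apply: contra_neq qr => ->.
  - by apply: contra_neq pr => ->.
by apply: (flag_of_face card_face' fT).
Qed.

Section GluedDirection.
Variables (d : rel V) (d' : rel V').
Hypothesis d_directed : directed_faces T d.
Hypothesis d'_directed : directed_faces T' d'.
Variables a0 b0 c0 : V.
Hypothesis abc0 : is_flag T (a0, b0, c0).
Hypothesis F_abc0 : F = [set a0; b0; c0].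

(* Both F and F' are directed triangles, so g either preserves or reverses
   their orientations; in the latter case we reverse d' globally. *)
Definition d'_aligned := if d' (g a0) (g b0) == d a0 b0 then d' else (fun x y => d' y x).

Lemma d'_aligned_directed : directed_faces T' d'_aligned.
Proof. by rewrite /d'_aligned; case: ifP => _ //; exact: directed_faces_rev. Qed.

Lemma g_flag0 : is_flag T' (g a0, g b0, g c0).
Proof.
have [aF bF cF] : [/\ a0 \in F, b0 \in F & c0 \in F] by rewrite F_abc0 !inE !eqxx ?orbT.
case/and4P: abc0 => _ ab bc ac.
have g_neq x y : x \in F -> y \in F -> x != y -> g x != g y.
  by move=> xF yF; apply: contra_neq; apply: g_injF.
rewrite /is_flag (_ : [set g a0; g b0; g c0] = F') ?FT' ?g_neq //.
by rewrite -gF F_abc0 !imsetU !imset_set1.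
Qed.

Lemma d'_alignedF a b : a \in F -> b \in F -> a != b -> d'_aligned (g a) (g b) = d a b.
Proof.
rewrite F_abc0 => aF bF ab.
have cyc' : cyclic_on (fun x y => d'_aligned (g x) (g y)) a0 b0 c0.
  exact (flag_cyclic_on d'_aligned_directed g_flag0).
apply: (cyclic_on_eq cyc' (flag_cyclic_on d_directed abc0) _ aF bF ab).
rewrite /d'_aligned; case: eqP => //= /eqP.
by have := dir_antisym d'_directed g_flag0; case: (d' _ _); case: (d' _ _); case: (d _ _).
Qed.

Definition glued_dir (p q : V + V') :=
  [exists a, exists b, [&& phi a == p, phi b == q & d a b]] ||
  [exists a', exists b', [&& inr a' == p, inr b' == q & d'_aligned a' b']].

Lemma glued_dir_phi a b : a != b -> glued_dir (phi a) (phi b) = d a b.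
Proof.
move=> ab; apply/orP/idP => [[] /existsP [x /existsP [y /and3P [/eqP Ex /eqP Ey dxy]]] | dab].
- by rewrite -(csum_vtx_inj Ex) -(csum_vtx_inj Ey).
- case: (csum_vtx_inr (esym Ex)) (csum_vtx_inr (esym Ey)) => aF -> [bF ->] in dxy *.
  by rewrite -d'_alignedF.
by left; apply/existsP; exists a; apply/existsP; exists b; rewrite !eqxx dab.
Qed.

Lemma glued_dir_inr a' b' : a' != b' -> glued_dir (inr a') (inr b') = d'_aligned a' b'.
Proof.
move=> ab; apply/orP/idP => [[] /existsP [x /existsP [y /and3P [/eqP Ex /eqP Ey dxy]]] | dab].
- case: (csum_vtx_inr Ex) (csum_vtx_inr Ey) => xF -> [yF ->].
  by rewrite d'_alignedF //; apply: contra_neq ab => xy; apply: inr_inj; rewrite -Ex -Ey xy.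
- by move: Ex Ey dxy => [->] [->].
by right; apply/existsP; exists a'; apply/existsP; exists b'; rewrite !eqxx dab.
Qed.

Lemma glued_dir_directed : directed_faces T2 glued_dir.
Proof.
move=> p q r /csum_flagP [] [a [b [c [abc -> -> ->]]]].
all: case/and4P: (abc) => _ ab bc _; have ba : b != a by rewrite eq_sym.
  by rewrite !glued_dir_phi //; exact: d_directed abc.
by rewrite !glued_dir_inr //; exact: d'_aligned_directed abc.
Qed.

End GluedDirection.

Lemma csum_directed (d : rel V) (d' : rel V') :
  directed_faces T d -> directed_faces T' d' -> exists d2, directed_faces T2 d2.
Proof.
move=> d_dir d'_dir; have [a0 [b0 [c0 [abc0 F_abc0]]]] := face_flag card_face FT.
by exists (glued_dir d d' a0 b0); exact: (glued_dir_directed d_dir d'_dir abc0 F_abc0).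
Qed.

End ConnectedSum.

Theorem lemma2 (V V' : finType) (T : {set {set V}}) (T' : {set {set V'}})
  (tau : seq (seq V)) (tau' : seq (seq V')) :
  triangulation T -> triangulation T' ->
  z_orientation T tau -> z_orientation T' tau' ->
  all_faces_typeII T tau -> all_faces_typeII T' tau' ->
  forall (F : {set V}) (F' : {set V'}) (g : V -> V'),
    F \in T -> F' \in T' -> g @: F = F' ->
    exists tau'' : seq (seq (V + V')),
      z_orientation (csum T T' F F' g) tau'' /\
      all_faces_typeII (csum T T' F F' g) tau''.
Proof.
move=> [_ face3 edge2 _ _] [_ face3' edge2' _ _] z_tau z_tau' II_tau II_tau' F F' g FT FT' gF.
have [d d_dir] := csum_directed face3 face3' FT FT' gF
  (dir_of_directed face3 edge2 z_tau II_tau) (dir_of_directed face3' edge2' z_tau' II_tau').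
have csum_face3 := csum_card_face face3 face3' FT FT' gF.
have csum_edge2 := csum_card_edge_faces face3 edge2 face3' edge2' FT FT' gF.
exists (zorient (csum T T' F F' g) d); split.
  exact: (zorient_z_orientation csum_face3 csum_edge2 d_dir).
exact: (zorient_typeII csum_face3 csum_edge2 d_dir).
Qed.
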